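(* Let $(X_1,X_2)\sim BDEW(\alpha,p,\beta_1,\beta_2,\beta_3)$ with $\alpha>0$, $0<p<1$, $\beta_1,\beta_2,\beta_3>0$. Then $$P(X_1<X_2)=\sum_{i=0}^{\infty}\Big\{[1-p^{(i+2)^{\alpha}}]^{\beta_2}-[1-p^{(i+1)^{\alpha}}]^{\beta_2}\Big\}[1-p^{(i+1)^{\alpha}}]^{\beta_1+\beta_3}.$$
   Context: The exponentiated discrete Weibull distribution $EDW(\alpha,p,\beta)$ ($\alpha,\beta>0$, $0<p<1$) is the distribution on $\mathbb{N}_0=\{0,1,2,\dots\}$ with cumulative distribution function $F_{EDW}(x;\alpha,p,\beta)=[1-p^{([x]+1)^{\alpha}}]^{\beta}$ for real $x\ge 0$, where $[x]$ is the largest integer $\le x$. The bivariate discrete exponentiated Weibull distribution $BDEW(\alpha,p,\beta_1,\beta_2,\beta_3)$ is the distribution of $(X_1,X_2)=(\max\{V_1,V_3\},\max\{V_2,V_3\})$ where $V_1,V_2,V_3$ are independent with $V_i\sim EDW(\alpha,p,\beta_i)$. *)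

From HB Require Import structures.
From mathcomp Require Import all_boot all_order all_algebra.
From mathcomp Require Import all_classical all_reals all_analysis.
Import Order.TTheory GRing.Theory Num.Theory.
Local Open Scope ring_scope.

(* CDF of the exponentiated discrete Weibull distribution EDW(alpha,p,beta)
   evaluated at x : nat (for real x >= 0 it is the value at [x]):
   F(x) = [1 - p^((x+1)^alpha)]^beta. *)
Definition EDW_cdf {R : realType} (alpha p beta : R) (x : nat) : R :=
  (1 - p `^ ((x.+1)%:R `^ alpha)) `^ beta.

From HB Require Import structures.
From mathcomp Require Import all_boot all_order all_algebra.
From mathcomp Require Import all_classical all_reals all_analysis.
From mathcomp Require Import zify.
Import Order.TTheory GRing.Theory Num.Theory.
Local Open Scope classical_set_scope.
Local Open Scope ring_scope.

(* X1 < X2 holds iff V1 < V2 and V3 < V2, so the event splits into the disjoint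
   events {V1 <= i, V2 = i+1, V3 <= i}.  By independence each has probability
   (F2(i+1) - F2(i)) F1(i) F3(i), with Fk the cdf of Vk, and F1(i) F3(i) merges
   into the single power with exponent b1 + b3; this merge is the only place
   where a positivity hypothesis (b1 + b3 <> 0) is needed. *)

Lemma maxn_ltn_maxn (a b c : nat) :
  (maxn a c < maxn b c)%N = (a < b)%N && (c < b)%N.
Proof. by apply/idP/andP; lia. Qed.

Section NatValued.
Context {R : realType} {d : measure_display} {T : measurableType d}.
Variables (mu : {measure set T -> \bar R}) (V : T -> nat).
Hypothesis mV : forall n : nat, measurable (V @^-1` [set n]).

Lemma measurable_le (n : nat) : measurable [set w | (V w <= n)%N].
Proof.
have -> : [set w | (V w <= n)%N] = \bigcup_(a in [set a | (a <= n)%N]) V @^-1` [set a].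
  by apply/seteqP; split => [w /= le|w [a /= le ->]]; first exists (V w).
exact: bigcup_measurable.
Qed.

Lemma measureI_le (E : set T) (n : nat) : measurable E ->
  mu (E `&` [set w | (V w <= n)%N]) =
  (\sum_(a < n.+1) mu (E `&` V @^-1` [set (a : nat)]))%E.
Proof.
move=> mE; pose F a := E `&` V @^-1` [set a].
have -> : E `&` [set w | (V w <= n)%N] = \big[setU/set0]_(a < n.+1) F a.
  rewrite -bigcup_mkord; apply/seteqP; split => [w [Ew le]|w [a /= lt [Ew ->]]].
    by exists (V w) => //=; rewrite ltnS.
  by split; rewrite //= -ltnS.
apply: measure_semi_additive => [a||]; first exact: measurableI.
  by move=> a b _ _ [w [[_ <-] [_ <-]]].
by apply: bigsetU_measurable => a _; exact: measurableI.
Qed.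

Lemma measure_le_sum (n : nat) :
  mu [set w | (V w <= n)%N] = (\sum_(a < n.+1) mu (V @^-1` [set (a : nat)]))%E.
Proof.
by rewrite -[X in mu X]setTI measureI_le //; apply: eq_bigr => a _; rewrite setTI.
Qed.

Lemma measure_le_succ (n : nat) :
  mu [set w | (V w <= n.+1)%N] = (mu [set w | (V w <= n)%N] + mu (V @^-1` [set n.+1]))%E.
Proof. by rewrite !measure_le_sum big_ord_recr. Qed.

Lemma measure_eq_succ (F : nat -> R) :
  (forall x : nat, mu [set w | (V w <= x)%N] = (F x)%:E) ->
  forall n : nat, mu (V @^-1` [set n.+1]) = (F n.+1 - F n)%:E.
Proof. by move=> cdf n; rewrite EFinB -!cdf measure_le_succ addeAC subee ?add0e // cdf. Qed.

End NatValued.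

Section IndependentAtoms.
Context {R : realType} {d : measure_display} {T : measurableType d}.
Variables (mu : {measure set T -> \bar R}) (V1 V2 V3 : T -> nat).
Hypotheses (mV1 : forall n : nat, measurable (V1 @^-1` [set n]))
  (mV2 : forall n : nat, measurable (V2 @^-1` [set n]))
  (mV3 : forall n : nat, measurable (V3 @^-1` [set n])).
Hypothesis indep : forall a b c : nat,
  mu [set w | V1 w = a /\ V2 w = b /\ V3 w = c] =
  (mu (V1 @^-1` [set a]) * mu (V2 @^-1` [set b]) * mu (V3 @^-1` [set c]))%E.

Lemma le_eq_le_setE (i k j : nat) :
  [set w | (V1 w <= i)%N /\ V2 w = k /\ (V3 w <= j)%N] =
  (V2 @^-1` [set k] `&` [set w | (V3 w <= j)%N]) `&` [set w | (V1 w <= i)%N].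
Proof. by apply/seteqP; split => w /=; rewrite /preimage /=; tauto. Qed.

Lemma measurable_le_eq_le (i k j : nat) :
  measurable [set w | (V1 w <= i)%N /\ V2 w = k /\ (V3 w <= j)%N].
Proof.
by rewrite le_eq_le_setE; apply: measurableI; [apply: measurableI => //|];
  exact: measurable_le.
Qed.

Lemma independent_le_eq_le (i k j : nat) :
  mu [set w | (V1 w <= i)%N /\ V2 w = k /\ (V3 w <= j)%N] =
  (mu [set w | (V1 w <= i)%N] * mu (V2 @^-1` [set k]) * mu [set w | (V3 w <= j)%N])%E.
Proof.
rewrite le_eq_le_setE measureI_le //; last by apply: measurableI => //; exact: measurable_le.
transitivity (\sum_(a < i.+1) \sum_(c < j.+1)
    mu (V1 @^-1` [set (a : nat)]) * mu (V2 @^-1` [set k]) * mu (V3 @^-1` [set (c : nat)]))%E.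
  apply: eq_bigr => a _.
  have -> : (V2 @^-1` [set k] `&` [set w | (V3 w <= j)%N]) `&` V1 @^-1` [set (a : nat)] =
      (V1 @^-1` [set (a : nat)] `&` V2 @^-1` [set k]) `&` [set w | (V3 w <= j)%N].
    by apply/seteqP; split => w /=; tauto.
  rewrite measureI_le //; last exact: measurableI.
  apply: eq_bigr => c _; rewrite -indep; congr (mu _).
  by apply/seteqP; split => w /=; rewrite /preimage /=; tauto.
rewrite !measure_le_sum // ge0_sume_distrl // ge0_sume_distrl => [|a _].
  by apply: eq_bigr => a _; rewrite ge0_sume_distrr.
exact: mule_ge0.
Qed.

End IndependentAtoms.

Theorem mainTheorem4 (R : realType) (d : measure_display) (T : measurableType d)
  (P : probability T R) (alpha p b1 b2 b3 : R) (V1 V2 V3 : T -> nat) :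
  0 < alpha -> 0 < p -> p < 1 -> 0 < b1 -> 0 < b2 -> 0 < b3 ->
  (* V1, V2, V3 are (discrete) random variables *)
  (forall n : nat, measurable (V1 @^-1` [set n])) ->
  (forall n : nat, measurable (V2 @^-1` [set n])) ->
  (forall n : nat, measurable (V3 @^-1` [set n])) ->
  (* V_i ~ EDW(alpha, p, beta_i) *)
  (forall x : nat, P [set w | (V1 w <= x)%N] = (EDW_cdf alpha p b1 x)%:E) ->
  (forall x : nat, P [set w | (V2 w <= x)%N] = (EDW_cdf alpha p b2 x)%:E) ->
  (forall x : nat, P [set w | (V3 w <= x)%N] = (EDW_cdf alpha p b3 x)%:E) ->
  (* V1, V2, V3 are mutually independent *)
  (forall a b c : nat,
      P [set w | V1 w = a /\ V2 w = b /\ V3 w = c] =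
      (P (V1 @^-1` [set a]) * P (V2 @^-1` [set b]) * P (V3 @^-1` [set c]))%E) ->
  (* (X1, X2) = (max V1 V3, max V2 V3);  P(X1 < X2) = ... *)
  P [set w | (maxn (V1 w) (V3 w) < maxn (V2 w) (V3 w))%N] =
  (\sum_(0 <= i <oo)
     (((1 - p `^ ((i.+2)%:R `^ alpha)) `^ b2 - (1 - p `^ ((i.+1)%:R `^ alpha)) `^ b2)
       * (1 - p `^ ((i.+1)%:R `^ alpha)) `^ (b1 + b3))%:E)%E.
Proof.
move=> _ _ _ b1_gt0 _ b3_gt0 mV1 mV2 mV3 cdf1 cdf2 cdf3 indep.
pose A i := [set w | (V1 w <= i)%N /\ V2 w = i.+1 /\ (V3 w <= i)%N].
have -> : [set w | (maxn (V1 w) (V3 w) < maxn (V2 w) (V3 w))%N] = \bigcup_i A i.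
  apply/seteqP; split => w /=; rewrite maxn_ltn_maxn.
    by move=> /andP[lt12 lt32]; exists (V2 w).-1 => //; rewrite /A /=; lia.
  by move=> [i _ [le1 [-> le3]]]; rewrite !ltnS le1 le3.
transitivity (\sum_(0 <= i <oo) P (A i))%E.
  apply/esym/cvg_lim => //; apply: measure_sigma_additive => [i|].
    exact: measurable_le_eq_le.
  by move=> i j _ _ [w [[_ [Vi _]] [_ [Vj _]]]]; apply: succn_inj; rewrite -Vi -Vj.
apply: eq_eseriesr => i _.
rewrite independent_le_eq_le //= cdf1 cdf3 (measure_eq_succ _ _ mV2 _ cdf2) -!EFinM.
congr EFin; rewrite /EDW_cdf powRD ?(gt_eqF (addr_gt0 b1_gt0 b3_gt0)) //.
by rewrite [RHS]mulrCA mulrA.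
Qed.
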